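(* Fix a test set $\mathbf{x}=\{x_1,\dots,x_n\}$ of size $n$ and a bounded performance metric $\Psi$. Let $\eta(x_i)=\mathbb{P}(Y=1\mid x_i)$ and let $\hat\eta(x_i)$ be estimates (computed from $m$ training samples) satisfying $\hat\eta(x_i)\xrightarrow{p}\eta(x_i)$ as $m\to\infty$. Let $\hat{\mathbb{P}}(\mathbf{y}\mid\mathbf{x})=\prod_{i=1}^n\hat\eta(x_i)^{y_i}(1-\hat\eta(x_i))^{1-y_i}$ and $\mathbb{P}(\mathbf{y}\mid\mathbf{x})=\prod_{i=1}^n\eta(x_i)^{y_i}(1-\eta(x_i))^{1-y_i}$. Let $\mathbf{s}^*\in\arg\max_{\mathbf{s}\in\{0,1\}^n}U_\Psi(\mathbf{s};\mathbb{P})$ and $\hat{\mathbf{s}}\in\arg\max_{\mathbf{s}\in\{0,1\}^n}U_\Psi(\mathbf{s};\hat{\mathbb{P}})$. Then \[U_\Psi(\mathbf{s}^*;\mathbb{P})-U_\Psi(\hat{\mathbf{s}};\mathbb{P})\xrightarrow{p}0.\]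
   Context: Labels are binary. A metric $\Psi$ is a function of the empirical confusion matrix (entries $\frac1n\sum_is_iy_i$, $\frac1n\sum_i(1-s_i)(1-y_i)$, $\frac1n\sum_is_i(1-y_i)$, $\frac1n\sum_i(1-s_i)y_i$) of predictions $\mathbf{s}\in\{0,1\}^n$ against labels $\mathbf{y}\in\{0,1\}^n$, written $\Psi(\mathbf{s},\mathbf{y})$. For a distribution $Q$ on $\{0,1\}^n$, $U_\Psi(\mathbf{s};Q)=\sum_{\mathbf{y}\in\{0,1\}^n}Q(\mathbf{y})\Psi(\mathbf{s},\mathbf{y})$. *)

From HB Require Import structures.
From mathcomp Require Import all_boot all_order all_algebra.
From mathcomp Require Import all_classical all_reals all_analysis.
Set Implicit Arguments. Unset Strict Implicit. Unset Printing Implicit Defensive.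
Import Order.TTheory GRing.Theory Num.Theory.
Local Open Scope ring_scope.
Local Open Scope classical_set_scope.

(* Label / prediction vectors in {0,1}^n, true = 1. *)
Notation labels n := {ffun 'I_n -> bool}.

Section Metric.
Variables (R : realType) (n : nat).

Definition conf_tp (s y : labels n) : R := n%:R^-1 * \sum_(i < n) ((s i : nat) * (y i : nat))%:R.
Definition conf_tn (s y : labels n) : R := n%:R^-1 * \sum_(i < n) ((1 - s i) * (1 - y i))%:R.
Definition conf_fp (s y : labels n) : R := n%:R^-1 * \sum_(i < n) ((s i : nat) * (1 - y i))%:R.
Definition conf_fn (s y : labels n) : R := n%:R^-1 * \sum_(i < n) ((1 - s i) * (y i : nat))%:R.

Definition metric (Psi : R -> R -> R -> R -> R) (s y : labels n) : R :=
  Psi (conf_tp s y) (conf_tn s y) (conf_fp s y) (conf_fn s y).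

Definition prodBern (e : 'I_n -> R) (y : labels n) : R :=
  \prod_(i < n) (e i ^+ (y i : nat) * (1 - e i) ^+ (1 - y i)).

Definition Uexp (Psi : R -> R -> R -> R -> R) (Q : labels n -> R) (s : labels n) : R :=
  \sum_(y : labels n) Q y * metric Psi s y.

Definition is_argmax (f : labels n -> R) (s : labels n) : Prop :=
  forall s' : labels n, f s' <= f s.

End Metric.

Definition cvg_in_prob {d} {Omega : measurableType d} {R : realType}
  (P : probability Omega R) (X : nat -> Omega -> R) (Y : Omega -> R) : Prop :=
  forall eps : R, 0 < eps ->
    (fun m => P [set w | eps < `|X m w - Y w|]) @ \oo --> 0%E.

From HB Require Import structures.
From mathcomp Require Import all_boot all_order all_algebra.
From mathcomp Require Import all_classical all_reals all_analysis.
From mathcomp Require Import ring lra.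

Set Implicit Arguments.
Unset Strict Implicit.
Unset Printing Implicit Defensive.
Import Order.TTheory GRing.Theory Num.Theory.
Local Open Scope ring_scope.
Local Open Scope classical_set_scope.

(** Each Bernoulli factor lies in [0, 1] and is 1-Lipschitz in its parameter,
    so the product distributions of two parameter vectors differ pointwise by
    at most their l1 distance, and the expected utilities of a bounded metric
    by a constant multiple of it.  An optimizer of the plug-in utility
    therefore loses at most twice that amount for the true utility.  So the
    regret can exceed [eps] only if some estimate is [delta]-far from its
    target, and a union bound over the [n] coordinates transfers convergence
    in probability from the estimates to the regret. *)

Section Perturbation.
Variable R : realDomainType.

Lemma prodr_norm_ile1 n (b : 'I_n -> R) :
  (forall i, `|b i| <= 1) -> `|\prod_(i < n) b i| <= 1.
Proof.
elim: n b => [|n IH] b hb; first by rewrite big_ord0 normr1.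
by rewrite big_ord_recr /= normrM mulr_ile1 //; apply: IH.
Qed.

Lemma normr_prodrB_le n (a b : 'I_n -> R) :
  (forall i, `|a i| <= 1) -> (forall i, `|b i| <= 1) ->
  `|\prod_(i < n) a i - \prod_(i < n) b i| <= \sum_(i < n) `|a i - b i|.
Proof.
elim: n a b => [|n IH] a b ha hb; first by rewrite !big_ord0 subrr normr0.
rewrite !big_ord_recr /=.
set A := \prod_(i < n) _; set B := \prod_(i < n) _.
have -> : A * a ord_max - B * b ord_max
          = (A - B) * a ord_max + B * (a ord_max - b ord_max) by ring.
apply: (le_trans (ler_normD _ _)); apply: lerD; rewrite normrM.
  apply: (le_trans (ler_wpM2l (normr_ge0 _) (ha _))).
  by rewrite mulr1; apply: IH.
have hB : `|B| <= 1 by apply: prodr_norm_ile1.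
by apply: (le_trans (ler_wpM2r (normr_ge0 _) hB)); rewrite mul1r.
Qed.

(* [prodBern e y] is convertible to [\prod_i bern (e i) (y i)]. *)
Definition bern (e : R) (b : bool) : R := e ^+ b * (1 - e) ^+ (1 - b)%N.

Lemma bern_norm_le1 (e : R) b : 0 <= e <= 1 -> `|bern e b| <= 1.
Proof.
move=> /andP[e0 e1]; rewrite /bern; case: b => /=.
  by rewrite expr1 expr0 mulr1 ger0_norm.
by rewrite expr0 expr1 mul1r ger0_norm ?subr_ge0 // lerBlDr lerDl.
Qed.

Lemma bern_lipschitz (a b : R) c : `|bern a c - bern b c| <= `|a - b|.
Proof.
rewrite /bern; case: c => /=; rewrite ?expr1 ?expr0 ?mulr1 ?mul1r //.
by rewrite opprB addrC addrA subrK distrC.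
Qed.

Lemma argmax_regret_le (T : Type) (f g : T -> R) (c : R) (s s' : T) :
  (forall t, f t <= f s) -> (forall t, g t <= g s') ->
  (forall t, `|f t - g t| <= c) -> f s - f s' <= c *+ 2.
Proof.
move=> fs gs' hc; have := hc s; have := hc s'; have := gs' s.
rewrite mulr2n => ? /ler_normlP[? ?] /ler_normlP[? ?]; lra.
Qed.

End Perturbation.

Section ExpectedUtility.
Variables (R : realType) (n : nat) (Psi : R -> R -> R -> R -> R) (M : R).
Hypothesis Psi_le : forall s y : labels n, `|metric Psi s y| <= M.

Lemma prodBern_lipschitz (e e' : 'I_n -> R) (y : labels n) :
  (forall i, 0 <= e i <= 1) -> (forall i, 0 <= e' i <= 1) ->
  `|prodBern e y - prodBern e' y| <= \sum_(i < n) `|e i - e' i|.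
Proof.
move=> e01 e'01.
apply: (le_trans (@normr_prodrB_le _ _ (fun i => bern (e i) (y i))
                                       (fun i => bern (e' i) (y i)) _ _)).
- by move=> i; apply: bern_norm_le1.
- by move=> i; apply: bern_norm_le1.
- by apply: ler_sum => i _; apply: bern_lipschitz.
Qed.

Lemma Uexp_dist_le (Q Q' : labels n -> R) (c : R) (s : labels n) :
  (forall y, `|Q y - Q' y| <= c) ->
  `|Uexp Psi Q s - Uexp Psi Q' s| <= (c * M) *+ #|{: labels n}|.
Proof.
move=> hQ; rewrite /Uexp -sumrB -sumr_const.
apply: (le_trans (ler_norm_sum _ _ _)); apply: ler_sum => y _.
by rewrite -mulrBl normrM ler_pM.
Qed.

Lemma plugin_regret_le (e e' : 'I_n -> R) (delta : R) (s s' : labels n) :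
  (forall i, 0 <= e i <= 1) -> (forall i, 0 <= e' i <= 1) ->
  (forall i, `|e' i - e i| <= delta) ->
  is_argmax (Uexp Psi (prodBern e)) s -> is_argmax (Uexp Psi (prodBern e')) s' ->
  Uexp Psi (prodBern e) s - Uexp Psi (prodBern e) s'
    <= n%:R * delta * (M *+ #|{: labels n}| *+ 2).
Proof.
move=> e01 e'01 hdelta sopt s'opt; rewrite !mulrnAr.
apply: (argmax_regret_le sopt s'opt) => t; apply: Uexp_dist_le => y.
apply: (le_trans (prodBern_lipschitz _ e01 e'01)).
rewrite mulr_natl -[n in _ *+ n]card_ord -sumr_const.
by apply: ler_sum => i _; rewrite distrC.
Qed.

End ExpectedUtility.

Section UnionBound.
Context d (Omega : measurableType d) (R : realType) (P : probability Omega R).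

Lemma measurable_dist_gt (X : Omega -> R) (c delta : R) :
  measurable_fun setT X -> measurable [set w | delta < `|X w - c|].
Proof.
move=> mX; have mdist : measurable_fun setT (fun w => `|X w - c|).
  apply: measurableT_comp; first exact: measurable_realfun.normr_measurable.
  by apply: measurable_realfun.measurable_funB => //; exact: measurable_cst.
have := mdist measurableT _ (measurable_itv `]delta, +oo[%O); rewrite setTI.
by congr measurable; apply/seteqP; split => w /=; rewrite in_itv /= andbT.
Qed.

Lemma measurable_finvalued (T : finType) (X : Omega -> T) (p : T -> Prop) :
  (forall t, measurable [set w | X w = t]) -> measurable [set w | p (X w)].
Proof.
move=> mX; have -> : [set w | p (X w)] = \bigcup_(t in p) [set w | X w = t].
  by apply/seteqP; split => [w pw | w [t pt /= ->]] //; exists (X w).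
by apply: fin_bigcup_measurable => //; exact: finite_finset.
Qed.

Lemma cvg_union_bound n (A : nat -> set Omega) (B : nat -> 'I_n -> set Omega) :
  (forall m, measurable (A m)) -> (forall m i, measurable (B m i)) ->
  (forall m, A m `<=` \bigcup_i B m i) ->
  (forall i, (fun m => P (B m i)) @ \oo --> 0%E) ->
  (fun m => P (A m)) @ \oo --> 0%E.
Proof.
move=> mA mB AB B0.
pose F m k := if insub k is Some i then B m i else set0.
have FB m (i : 'I_n) : F m i = B m i by rewrite /F valK.
have le_sum m : (P (A m) <= \sum_(i < n) P (B m i))%E.
  rewrite -(eq_bigr _ (fun i _ => congr1 P (FB m i))).
  apply: content_subadditive => //.
    by move=> k _; rewrite /F; case: insub.
  move=> w /AB[i _ Bi]; rewrite -bigcup_mkord; exists (val i) => //=.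
  by rewrite FB.
have sum0 : (fun m => \sum_(i < n) P (B m i)) @ \oo --> (\sum_(i < n) 0 : \bar R)%E.
  by apply: cvg_nnesum => // i _; apply: nearW => m.
rewrite big1_eq in sum0.
apply: (squeeze_cvge _ (cvg_cst 0%E) sum0).
by apply: nearW => m; rewrite measure_ge0 le_sum.
Qed.

End UnionBound.

Theorem theorem2 (R : realType) (n : nat)
  (Psi : R -> R -> R -> R -> R)
  (Psi_bounded : exists M : R, forall s y : labels n, `|metric Psi s y| <= M)
  (eta : 'I_n -> R) (eta01 : forall i, 0 <= eta i <= 1)
  (d : measure_display) (Omega : measurableType d) (P : probability Omega R)
  (etahat : nat -> 'I_n -> Omega -> R)
  (etahat_meas : forall m i, measurable_fun setT (etahat m i))
  (etahat01 : forall m i w, 0 <= etahat m i w <= 1)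
  (etahat_cvg : forall i, cvg_in_prob P (fun m => etahat m i) (fun _ => eta i))
  (sstar : labels n) (sstar_opt : is_argmax (Uexp Psi (prodBern eta)) sstar)
  (shat : nat -> Omega -> labels n)
  (shat_opt : forall m w, is_argmax (Uexp Psi (prodBern (fun i => etahat m i w))) (shat m w))
  (shat_meas : forall m (s : labels n), measurable [set w | shat m w = s]) :
  cvg_in_prob P
    (fun m w => Uexp Psi (prodBern eta) sstar - Uexp Psi (prodBern eta) (shat m w))
    (fun _ => 0).
Proof.
move=> eps eps0; have [M hM] := Psi_bounded.
have M0 : 0 <= M := le_trans (normr_ge0 _) (hM sstar sstar).
pose C := M *+ #|{: labels n}| *+ 2.
have C0 : 0 <= C by rewrite mulrn_wge0 // mulrn_wge0.
pose delta := eps / (n%:R * C + 1).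
have nC1_gt0 : 0 < n%:R * C + 1 by rewrite ltr_wpDl // mulr_ge0.
have delta0 : 0 < delta by rewrite divr_gt0.
have regret_bound : n%:R * delta * C <= eps.
  rewrite /delta mulrAC mulrA ler_pdivrMr //.
  by rewrite [_ * eps]mulrC ler_pM2l // lerDl.
apply: (cvg_union_bound (B := fun m i => [set w | delta < `|etahat m i w - eta i|])).
- move=> m; exact: (measurable_finvalued
    (fun s => eps < `|_ - Uexp Psi (prodBern eta) s - 0|) (shat_meas m)).
- by move=> m i; apply: measurable_dist_gt.
- move=> m w; rewrite /= subr0 ger0_norm ?subr_ge0 ?sstar_opt // => regret_gt.
  have [[i far] | all_close] := pselect (exists i, delta < `|etahat m i w - eta i|).
    by exists i.
  have close i : `|etahat m i w - eta i| <= delta.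
    by rewrite leNgt; apply/negP => far; apply: all_close; exists i.
  have := plugin_regret_le hM eta01 (etahat01 m ^~ w) close sstar_opt (shat_opt m w).
  by move/le_trans/(_ regret_bound); rewrite leNgt regret_gt.
- by move=> i; apply: etahat_cvg.
Qed.
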